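(* Let $G$ and $H$ be two nontrivial connected graphs with $hn_{cc}(H)=2$. Then $hn_{cc}(G)\leq hn_{cc}(G\Box H)\leq hn_{cc}(G)+1$. Moreover, $hn_{cc}(G\Box H)=hn_{cc}(G)$ if and only if there is a minimum cycle hull set $S$ of $G$ such that $S$ can be partitioned into two sets $S_1$ and $S_2$ with $\langle S_1\rangle_C\cap\langle S_2\rangle_C\neq\emptyset$.
   Context: All graphs are finite, simple and undirected. For a graph $G$ and $S\subseteq V(G)$, the cycle interval $\langle S\rangle$ consists of the vertices of $S$ together with every vertex $w\in V(G)\setminus S$ such that $G[S\cup\{w\}]$ contains a cycle through $w$; $S$ is cycle convex if $\langle S\rangle=S$; the cycle convex hull $\langle S\rangle_C$ is the smallest cycle convex set containing $S$; a (cycle) hull set is a set $S$ with $\langle S\rangle_C=V(G)$, and $hn_{cc}(G)$ is the minimum cardinality of a hull set; a minimum hull set is a hull set of cardinality $hn_{cc}(G)$. The Cartesian product $G\Box H$ has vertex set $V(G)\times V(H)$, with $(g_1,h_1)\sim(g_2,h_2)$ iff ($g_1\sim g_2$ and $h_1=h_2$) or ($g_1=g_2$ and $h_1\sim h_2$). A graph is nontrivial if it has at least two vertices. *)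

From mathcomp Require Import all_boot.
Set Implicit Arguments. Unset Strict Implicit. Unset Printing Implicit Defensive.

Section CycleConvexity.
Variables (T : finType) (e : rel T).

Definition simple_graph := symmetric e /\ irreflexive e.

Definition is_cycle_through (A : {set T}) (w : T) (c : seq T) : bool :=
  [&& uniq c, 2 < size c, w \in c, all (fun x => x \in A) c & cycle e c].

(* boolean version: since a cycle is duplicate-free, its length is <= #|T|,
   so it suffices to search among tuples of length at most #|T| *)
Definition has_cycle_through (A : {set T}) (w : T) : bool :=
  [exists n : 'I_#|T|.+1, exists c : n.-tuple T, is_cycle_through A w c].

Definition cycle_interval (S : {set T}) : {set T} :=
  S :|: [set w | (w \notin S) && has_cycle_through (w |: S) w ].

Definition cycle_convex (S : {set T}) : bool := cycle_interval S == S.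

Definition cc_hull (S : {set T}) : {set T} :=
  \bigcap_(C : {set T} | (S \subset C) && cycle_convex C) C.

Definition cc_hull_set (S : {set T}) : bool := cc_hull S == [set: T].

(* hull number: minimum cardinality of a hull set (setT is always one) *)
Definition hn_cc : nat :=
  \big[minn/#|T|]_(S : {set T} | cc_hull_set S) #|S|.

Definition min_hull_set (S : {set T}) : bool := cc_hull_set S && (#|S| == hn_cc).

Definition connected_graph : Prop := forall x y : T, connect e x y.

End CycleConvexity.

Definition cart_prod (T1 T2 : finType) (e1 : rel T1) (e2 : rel T2) : rel (T1 * T2) :=
  fun u v => (e1 u.1 v.1 && (u.2 == v.2)) || ((u.1 == v.1) && e2 u.2 v.2).

From mathcomp Require Import all_boot.

(* A set C is cycle convex iff no vertex outside C has two distinct neighbours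
   joined by a path of G[C].  For a convex set D of G □ H, every layer G × {h}
   and every fibre {g} × H of D is convex, and D contains the fourth corner of
   any square three of whose corners it contains; so a full fibre of D spreads
   along the edges of a layer of D, and D is everything as soon as it contains a
   full layer and a full fibre.  Hence the projection of a hull set of G □ H is
   a hull set of G, while a hull set of G in one layer together with a hull set
   of H minus one vertex in one fibre is a hull set of G □ H: this gives
   hn(G) <= hn(G □ H) < hn(G) + hn(H).

   If hn(G □ H) = hn(G), a minimum hull set T of G □ H projects injectively
   onto a minimum hull set of G; split it according to the H-coordinate.  If
   for every h the hull of the level-h part were disjoint from the hull of the
   rest, the union of the sets hull(level-h part) × {h} would be a convex set
   containing T but not a whole fibre.  Conversely, let S = S1 ⊔ S2 be a
   minimum hull set with x in both hulls, and let Q be the part of S2 in the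
   component of x in G[hull S2], so that x ∈ hull Q.  With {h1, h2} a hull set
   of H, put Q in layer h2 and the rest of S in layer h1: the hull contains
   (x, h1) and (x, h2), hence the fibre of x, which spreads over Q inside
   hull Q, so the layer h1 contains S and the hull is everything. *)

Set Implicit Arguments. Unset Strict Implicit. Unset Printing Implicit Defensive.

Lemma homo_connect (T U : finType) (r : rel T) (r' : rel U) (f : T -> U) :
  {homo f : x y / r x y >-> connect r' x y} ->
  {homo f : x y / connect r x y >-> connect r' x y}.
Proof.
move=> f_homo x _ /connectP[p x_p ->].
elim: p x x_p => //= y p IHp x /andP[xy /IHp]; exact/connect_trans/f_homo.
Qed.

Section CycleConvexity.
Variables (T : finType) (e : rel T).

Definition induced (A : {set T}) : rel T := fun x y => [&& x \in A, y \in A & e x y].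

Definition component (A : {set T}) (x : T) : {set T} := [set y | connect (induced A) x y].

Lemma induced_path (A : {set T}) x p :
  x \in A -> path (induced A) x p = all (fun y => y \in A) p && path e x p.
Proof.
elim: p x => //= y p IHp x xA; rewrite /induced xA /=.
by case yA: (y \in A); rewrite //= IHp // andbCA.
Qed.

Lemma connect_inducedS (A B : {set T}) x y :
  A \subset B -> connect (induced A) x y -> connect (induced B) x y.
Proof.
move=> /subsetP AB; apply: connect_sub => u v /and3P[uA vA uv].
by apply: connect1; rewrite /induced AB ?AB.
Qed.

Lemma connect_induced_closed (A B : {set T}) x y :
  (forall u v, u \in B -> induced A u v -> v \in B) -> x \in B ->
  connect (induced A) x y -> connect (induced (A :&: B)) x y.
Proof.
move=> B_closed + /connectP[p + ->]; elim: p x => [|z p IHp] x xB /=.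
  by rewrite connect0.
case/andP=> xz z_p; have zB := B_closed x z xB xz.
apply: connect_trans (IHp z zB z_p); apply: connect1.
by case/and3P: xz => xA zA xz; rewrite /induced !inE xA xB zA zB.
Qed.

Lemma component_sub (A : {set T}) x : x \in A -> component A x \subset A.
Proof.
move=> xA; apply/subsetP => y; rewrite inE => /connectP[p + ->].
by elim: p x xA => //= z p IHp x _ /andP[/and3P[_ zA _] /IHp]; apply.
Qed.

Lemma connect_component (A : {set T}) x y :
  y \in component A x -> connect (induced (component A x)) x y.
Proof.
rewrite inE => xy; apply: connect_inducedS (subsetIr A _) _.
apply: connect_induced_closed xy => [u v|]; rewrite !inE ?connect0 //.
by move=> xu uv; apply: connect_trans xu (connect1 uv).
Qed.

Lemma has_cycle_throughP (A : {set T}) w :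
  reflect (exists c, is_cycle_through e A w c) (has_cycle_through e A w).
Proof.
apply: (iffP existsP) => [[n /existsP[c c_cycle]] | [c c_cycle]]; first by exists c.
have c_small : size c < #|T|.+1.
  by case/and5P: c_cycle => c_uniq _ _ _ _; rewrite ltnS -(card_uniqP c_uniq) max_card.
by exists (Ordinal c_small); apply/existsP; exists (in_tuple c).
Qed.

Hypothesis e_sym : symmetric e.

Lemma cycle_through_of_connect (A : {set T}) w a b :
  w \notin A -> a \in A -> a != b -> e w a -> e w b -> connect (induced A) a b ->
  exists c, is_cycle_through e (w |: A) w c.
Proof.
move=> wA aA ab wa wb /connectP[p0 /shortenP[p a_p ap_uniq _] b_last].
move: a_p; rewrite induced_path // => /andP[pA a_p].
have ap_A : all (fun y => y \in A) (a :: p) by rewrite /= aA.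
have p_nil : p != [::] by apply: contraNneq ab => p_nil; rewrite b_last p_nil.
exists (w :: a :: p); apply/and5P; split.
- rewrite cons_uniq ap_uniq andbT; apply: contra wA => /(allP ap_A); exact.
- by rewrite /= !ltnS lt0n size_eq0.
- exact: mem_head.
- by apply/allP => y /predU1P[->|/(allP ap_A) yA]; rewrite !inE ?eqxx ?yA ?orbT.
- by rewrite /= wa rcons_path a_p -b_last e_sym.
Qed.

Lemma connect_of_cycle_through (A : {set T}) w c :
  w \notin A -> is_cycle_through e (w |: A) w c ->
  exists a b, [/\ a \in A, b \in A, a != b, e w a & e w b] /\ connect (induced A) a b.
Proof.
move=> wA /and5P[c_uniq c_size wc c_in c_cycle].
have := rot_index wc; set q := drop _ _ ++ _ => rot_c.
have: [&& uniq (w :: q), 2 < size (w :: q),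
          all (fun y => y \in w |: A) (w :: q) & cycle e (w :: q)].
  by rewrite -rot_c rot_uniq size_rot rot_cycle (eq_all_r (mem_rot _ c)) c_uniq c_size c_in.
case: q {rot_c} => [|a p] /and4P[] //=; rewrite !ltnS lt0n size_eq0.
move=> /andP[w_ap ap_uniq] p_nil /and3P[_ a_wA p_wA].
rewrite rcons_path => /and3P[wa a_p pw].
have ap_A : all (fun y => y \in A) (a :: p).
  apply/allP => y y_ap; have: y \in w |: A by case/predU1P: y_ap => [->|/(allP p_wA)].
  by rewrite !inE => /predU1P[yw|//]; rewrite -yw y_ap in w_ap.
have /andP[aA pA] := ap_A.
exists a, (last a p); split; first split => //.
- exact: (allP ap_A) (mem_last a p).
- case: p p_nil ap_uniq {a_p pw p_wA ap_A pA w_ap} => //= y p _ /andP[a_yp _].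
  by apply: contraNneq a_yp => ->; exact: mem_last.
- by rewrite e_sym.
- by apply/connectP; exists p; rewrite // induced_path // a_p andbT.
Qed.

Lemma cycle_intervalP (A : {set T}) w : w \notin A ->
  reflect (exists a b, [/\ a \in A, b \in A, a != b, e w a & e w b] /\ connect (induced A) a b)
          (w \in cycle_interval e A).
Proof.
move=> wA; rewrite /cycle_interval !inE (negbTE wA) /=.
apply: (iffP (has_cycle_throughP _ _)) => [[c] | [a [b [[aA _ ab wa wb] a_b]]]].
  exact: connect_of_cycle_through.
exact: cycle_through_of_connect a_b.
Qed.

Lemma cycle_convexP (C : {set T}) :
  reflect (forall w a b, w \notin C -> a \in C -> b \in C -> a != b -> e w a -> e w b ->
             ~~ connect (induced C) a b)
          (cycle_convex e C).
Proof.
apply: (iffP eqP) => [C_convex w a b wC aC bC ab wa wb | C_convex].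
  apply/negP => a_b; have: w \in cycle_interval e C.
    by apply/(cycle_intervalP wC); exists a, b.
  by rewrite C_convex (negbTE wC).
apply/setP => w; apply/idP/idP => [wI | wC]; last by rewrite in_setU wC.
apply: contraT => wC; have [a [b [[aC bC ab wa wb] a_b]]] := cycle_intervalP wC wI.
by have := C_convex w a b wC aC bC ab wa wb; rewrite a_b.
Qed.

Lemma sub_cc_hull (S : {set T}) : S \subset cc_hull e S.
Proof. by apply/bigcapsP => C /andP[]. Qed.

Lemma cc_hull_min (S C : {set T}) :
  S \subset C -> cycle_convex e C -> cc_hull e S \subset C.
Proof. by move=> SC C_convex; apply: bigcap_inf; rewrite SC C_convex. Qed.

Lemma cc_hullS (S S' : {set T}) : S \subset S' -> cc_hull e S \subset cc_hull e S'.
Proof.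
move=> SS'; apply/bigcapsP => C /andP[S'C C_convex].
by apply: cc_hull_min (subset_trans SS' S'C) C_convex.
Qed.

Lemma cc_hull_convex (S : {set T}) : cycle_convex e (cc_hull e S).
Proof.
apply/cycle_convexP => w a b wH aH bH ab wa wb; apply: contra wH => a_b.
apply/bigcapP => C /andP[SC C_convex]; apply: contraT => wC.
have HC := cc_hull_min SC C_convex.
move/cycle_convexP: C_convex => /(_ w a b wC (subsetP HC a aH) (subsetP HC b bH) ab wa wb).
by rewrite (connect_inducedS HC a_b).
Qed.

Lemma cc_hull_setP (S : {set T}) :
  reflect (forall C : {set T}, S \subset C -> cycle_convex e C -> forall x, x \in C)
          (cc_hull_set e S).
Proof.
apply: (iffP eqP) => [hullT C SC C_convex x | S_hull].
  by apply: (subsetP (cc_hull_min SC C_convex)); rewrite hullT inE.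
by apply/setP => x; rewrite inE; apply/bigcapP => C /andP[SC C_convex]; exact: S_hull.
Qed.

Lemma hn_cc_le_card (S : {set T}) : cc_hull_set e S -> hn_cc e <= #|S|.
Proof.
move=> S_hull; rewrite /hn_cc -big_filter.
have: S \in [seq S <- index_enum _ | cc_hull_set e S].
  by rewrite mem_filter S_hull mem_index_enum.
elim: [seq _ <- _ | _] => //= S' s IHs; rewrite inE big_cons => /predU1P[<-|/IHs].
  exact: geq_minl.
by apply: leq_trans; exact: geq_minr.
Qed.

Lemma min_hull_set_exists : exists S, min_hull_set e S.
Proof.
rewrite /min_hull_set /hn_cc.
apply: (big_ind (fun n => exists S, cc_hull_set e S && (#|S| == n))).
- exists setT; rewrite cardsT eqxx andbT.
  by apply/cc_hull_setP => C /subsetP TC _ x; apply: TC; rewrite inE.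
- by move=> m n [S hS] [S' hS']; rewrite /minn; case: ifP => _; [exists S | exists S'].
- by move=> S S_hull; exists S; rewrite S_hull eqxx.
Qed.

Lemma cycle_convexUD (H X Y : {set T}) :
  cycle_convex e H -> cycle_convex e Y -> Y \subset H ->
  (forall u v, u \in X -> induced H u v -> v \in X) ->
  cycle_convex e (Y :|: (H :\: X)).
Proof.
move=> /cycle_convexP H_convex /cycle_convexP Y_convex YH X_closed.
set M := Y :|: (H :\: X).
have MH : M \subset H by rewrite subUset subsetDl andbT.
have MX_Y : M :&: X \subset Y.
  by apply/subsetP => u /setIP[/setUP[// | /setDP[_ /negP uX]] /uX].
apply/cycle_convexP => w a b wM aM bM ab wa wb; apply/negP => a_b.
have [aH bH] := (subsetP MH a aM, subsetP MH b bM).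
have [wH | wH] := boolP (w \in H); last first.
  by move: (H_convex w a b wH aH bH ab wa wb); rewrite (connect_inducedS MH a_b).
have wX : w \in X by apply: contraT => wX; rewrite in_setU in_setD wX wH orbT in wM.
have [aX bX] : a \in X /\ b \in X.
  by split; apply: X_closed wX _; rewrite /induced wH ?aH ?bH.
have wY : w \notin Y by apply: contra wM; rewrite in_setU => ->.
have [aY bY] : a \in Y /\ b \in Y by split; apply: (subsetP MX_Y); rewrite in_setI ?aM ?bM.
case/negP: (Y_convex w a b wY aY bY ab wa wb).
apply: connect_inducedS MX_Y _; apply: connect_induced_closed aX a_b => u v uX uv.
by apply: X_closed uX _; case/and3P: uv => uM vM uv; rewrite /induced !(subsetP MH).
Qed.

Lemma component_sub_cc_hull (K : {set T}) x : x \in cc_hull e K ->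
  component (cc_hull e K) x \subset cc_hull e (K :&: component (cc_hull e K) x).
Proof.
set H := cc_hull e K; set X := component H x; set Y := cc_hull e (K :&: X) => xH.
have YH : Y \subset H by rewrite cc_hullS ?subsetIl.
have X_closed u v : u \in X -> induced H u v -> v \in X.
  by rewrite !inE => xu uv; apply: connect_trans xu (connect1 uv).
have KM : K \subset Y :|: (H :\: X).
  apply/subsetP => k kK; rewrite in_setU in_setD; case kX: (k \in X) => /=.
    by rewrite (subsetP (sub_cc_hull _)) // in_setI kK kX.
  by rewrite (subsetP (sub_cc_hull K)) ?orbT.
have M_convex := cycle_convexUD (cc_hull_convex K) (cc_hull_convex (K :&: X)) YH X_closed.
have /subsetP HM := cc_hull_min KM M_convex.
apply/subsetP => y yX; have := HM y (subsetP (component_sub xH) y yX).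
by rewrite in_setU in_setD yX /= orbF.
Qed.

Lemma cc_hull_connected_subset (K : {set T}) x : x \in cc_hull e K ->
  exists Q : {set T}, [/\ Q \subset K, x \in cc_hull e Q &
                          {in Q, forall q, connect (induced (cc_hull e Q)) x q}].
Proof.
move=> xH; have XQ := component_sub_cc_hull xH.
exists (K :&: component (cc_hull e K) x); split; first exact: subsetIl.
  by apply: (subsetP XQ); rewrite inE connect0.
move=> q /setIP[_ qX]; exact: connect_inducedS XQ (connect_component qX).
Qed.

End CycleConvexity.

Lemma convex_preim (T U : finType) (e : rel T) (e' : rel U) (f : T -> U) (D : {set U}) :
  symmetric e -> symmetric e' -> injective f -> {homo f : x y / e x y >-> e' x y} ->
  cycle_convex e' D -> cycle_convex e (f @^-1: D).
Proof.
move=> e_sym e'_sym f_inj f_homo /(cycle_convexP e'_sym) D_convex.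
apply/(cycle_convexP e_sym) => w a b; rewrite !inE => wD aD bD ab wa wb.
have fab : f a != f b by rewrite inj_eq.
apply: contra (D_convex _ _ _ wD aD bD fab (f_homo _ _ wa) (f_homo _ _ wb)).
apply: homo_connect => u v /and3P[uD vD uv]; apply: connect1.
by rewrite !inE in uD vD; rewrite /induced uD vD f_homo.
Qed.

Section CartesianProduct.
Variables (T1 T2 : finType) (e1 : rel T1) (e2 : rel T2).
Hypotheses (e1_sym : symmetric e1) (e2_sym : symmetric e2).
Local Notation P := (cart_prod e1 e2).
Local Notation layer D h := [set g | (g, h) \in D].
Local Notation fibre D g := [set h | (g, h) \in D].

Lemma cart_prod_sym : symmetric P.
Proof. by move=> u v; rewrite /cart_prod e1_sym e2_sym (eq_sym u.1) (eq_sym u.2). Qed.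

Lemma layer_convex (D : {set T1 * T2}) h : cycle_convex P D -> cycle_convex e1 (layer D h).
Proof.
apply: (convex_preim e1_sym cart_prod_sym) => [u v [] // | u v uv].
by rewrite /cart_prod /= uv eqxx.
Qed.

Lemma fibre_convex (D : {set T1 * T2}) g : cycle_convex P D -> cycle_convex e2 (fibre D g).
Proof.
apply: (convex_preim e2_sym cart_prod_sym) => [u v [] // | u v uv].
by rewrite /cart_prod /= uv eqxx orbT.
Qed.

Lemma setXT_convex (C : {set T1}) : cycle_convex e1 C -> cycle_convex P (setX C [set: T2]).
Proof.
move=> /(cycle_convexP e1_sym) C_convex; apply/(cycle_convexP cart_prod_sym).
move=> [g h] [a1 a2] [b1 b2]; rewrite !inE !andbT /= => gC a1C b1C ab.
rewrite /cart_prod /= => /orP[/andP[ga /eqP ha]|/andP[/eqP ga _]]; last by rewrite ga a1C in gC.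
move=> /orP[/andP[gb /eqP hb]|/andP[/eqP gb _]]; last by rewrite gb b1C in gC.
subst a2 b2.
have a1b1 : a1 != b1 by apply: contra_neq ab => ->.
apply: contra (C_convex _ _ _ gC a1C b1C a1b1 ga gb); apply: (homo_connect (f := fst)).
move=> [u1 u2] [v1 v2]; rewrite /induced !inE !andbT /cart_prod /= => /and3P[u1C v1C].
case/orP => [/andP[uv _] | /andP[/eqP <- _]]; last exact: connect0.
by apply: connect1; rewrite /induced u1C v1C.
Qed.

Lemma cc_hull_set_fst (h0 : T2) (T : {set T1 * T2}) :
  cc_hull_set P T -> cc_hull_set e1 (fst @: T).
Proof.
move=> /cc_hull_setP T_hull; apply/cc_hull_setP => C /subsetP TC C_convex g.
have: (g, h0) \in setX C [set: T2].
  apply: T_hull (setXT_convex C_convex) _; apply/subsetP => -[u1 u2] uT.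
  by rewrite !inE andbT (TC _ (imset_f fst uT)).
by rewrite !inE andbT.
Qed.

Lemma hn_cc_le_prod (h0 : T2) : hn_cc e1 <= hn_cc P.
Proof.
have [T /andP[T_hull /eqP <-]] := min_hull_set_exists P.
exact: leq_trans (hn_cc_le_card (cc_hull_set_fst h0 T_hull)) (leq_imset_card _ _).
Qed.

Lemma min_hull_set_fst (h0 : T2) (T : {set T1 * T2}) :
  hn_cc P = hn_cc e1 -> min_hull_set P T ->
  min_hull_set e1 (fst @: T) /\ {in T &, injective fst}.
Proof.
move=> hn_eq /andP[T_hull /eqP T_card].
have fstT_hull := cc_hull_set_fst h0 T_hull.
have card_fstT : #|fst @: T| = #|T|.
  by apply/eqP; rewrite eqn_leq leq_imset_card T_card hn_eq hn_cc_le_card.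
split; first by rewrite /min_hull_set fstT_hull card_fstT T_card hn_eq eqxx.
by apply/imset_injP; rewrite card_fstT.
Qed.

Hypothesis e2_irr : irreflexive e2.

Definition layered (K : T2 -> {set T1}) : {set T1 * T2} := [set u | u.1 \in K u.2].

Section Layered.
Variable K : T2 -> {set T1}.
Hypothesis K_disjoint : forall h h', h != h' -> [disjoint K h & K h'].

Lemma connect_layered u v : connect (induced P (layered K)) u v ->
  v.2 = u.2 /\ connect (induced e1 (K u.2)) u.1 v.1.
Proof.
case/connectP=> p + ->; elim: p u => [|y p IHp] u /=; first by rewrite connect0.
case/andP=> /and3P[uK yK uy] y_p; rewrite !inE in uK yK.
have [uy1 uy2] : e1 u.1 y.1 /\ y.2 = u.2.
  case/orP: uy => /andP[uy1 uy2]; first by rewrite (eqP uy2).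
  have u2y2 : u.2 != y.2 by apply: contraTneq uy2 => ->; rewrite e2_irr.
  by rewrite (eqP uy1) in uK; rewrite (disjointFr (K_disjoint u2y2) uK) in yK.
have [IH2 IH1] := IHp y y_p; split; first by rewrite IH2 uy2.
rewrite uy2 in IH1; apply: connect_trans IH1; apply: connect1.
by rewrite /induced uK -uy2 yK uy1.
Qed.

Lemma layered_convex : (forall h, cycle_convex e1 (K h)) -> cycle_convex P (layered K).
Proof.
move=> K_convex; apply/(cycle_convexP cart_prod_sym) => [[g h] [a1 a2] [b1 b2]].
rewrite !inE /= => gK aK bK ab wa wb; apply/negP => /connect_layered /= [ba a_b].
subst b2; rewrite /cart_prod /= in wa wb.
case/orP: wa => /andP[ga ha]; case/orP: wb => /andP[gb hb].
- rewrite -(eqP ha) in aK bK a_b.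
  have a1b1 : a1 != b1 by apply: contra_neq ab => ->.
  have /(cycle_convexP e1_sym) := K_convex h.
  by move=> /(_ g a1 b1 gK aK bK a1b1 ga gb); rewrite a_b.
- by rewrite (eqP ha) e2_irr in hb.
- by rewrite (eqP hb) e2_irr in ha.
- by rewrite -(eqP ga) -(eqP gb) eqxx in ab.
Qed.

End Layered.

Lemma split_of_hn_cc_prod (g0 : T1) (hA hB : T2) : hA != hB -> hn_cc P = hn_cc e1 ->
  exists S S1 S2 : {set T1}, [/\ min_hull_set e1 S, S1 :|: S2 = S, S1 :&: S2 = set0 &
                                 cc_hull e1 S1 :&: cc_hull e1 S2 != set0].
Proof.
move=> hAB hn_eq; have [T T_min] := min_hull_set_exists P.
have [S_min fst_inj] := min_hull_set_fst hA hn_eq T_min.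
pose level_in h := [set u in T | u.2 == h]; pose level_out h := [set u in T | u.2 != h].
pose K h := cc_hull e1 (fst @: level_in h); pose K' h := cc_hull e1 (fst @: level_out h).
case: (pickP (fun h => K h :&: K' h != set0)) => [h Kh_meet | no_meet].
  have levelsU : level_in h :|: level_out h = T.
    by apply/setP => u; rewrite !inE -andb_orr orbN andbT.
  have levelsI : level_in h :&: level_out h = set0.
    by apply/setP => u; rewrite !inE andbACA andbN andbF.
  exists (fst @: T), (fst @: level_in h), (fst @: level_out h); split => //.
    by rewrite -imsetU levelsU.
  rewrite -imsetI ?levelsI ?imset0 // => u v /setIdP[uT _] /setIdP[vT _]; exact: fst_inj.
have K_disjoint h h' : h != h' -> [disjoint K h & K h'].
  move=> hh'; rewrite -setI_eq0 -subset0 -(eqP (negbFE (no_meet h))) setIS // cc_hullS //.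
  by apply: imsetS; apply/subsetP => u; rewrite !inE => /andP[-> /eqP ->]; rewrite eq_sym hh'.
have D_convex := layered_convex K_disjoint (fun h => cc_hull_convex e1_sym _).
have TD : T \subset layered K.
  apply/subsetP => u uT; rewrite inE; apply: (subsetP (sub_cc_hull _ _)).
  by apply: imset_f; rewrite inE uT eqxx.
have /andP[/cc_hull_setP T_hull _] := T_min.
have := T_hull _ TD D_convex (g0, hA); rewrite inE /= => g0_KA.
have := T_hull _ TD D_convex (g0, hB); rewrite inE /=.
by rewrite (disjointFr (K_disjoint _ _ hAB) g0_KA).
Qed.

Hypothesis e1_irr : irreflexive e1.

Lemma convex_square (D : {set T1 * T2}) g g' h h' : cycle_convex P D ->
  (g, h) \in D -> (g, h') \in D -> (g', h) \in D -> e1 g g' -> e2 h h' -> (g', h') \in D.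
Proof.
move=> /(cycle_convexP cart_prod_sym) D_convex gh gh' g'h gg' hh'; apply: contraT => g'h'D.
have neq : (g', h) != (g, h') by apply: contraTneq gg' => -[->]; rewrite e1_irr.
have g'h'_g'h : P (g', h') (g', h) by rewrite /cart_prod /= eqxx e2_sym hh' orbT.
have g'h'_gh' : P (g', h') (g, h') by rewrite /cart_prod /= e1_sym gg' eqxx.
case/negP: (D_convex _ _ _ g'h'D g'h gh' neq g'h'_g'h g'h'_gh').
apply: (connect_trans (y := (g, h))); apply: connect1.
  by rewrite /induced g'h gh /cart_prod /= e1_sym gg' eqxx.
by rewrite /induced gh gh' /cart_prod /= hh' eqxx orbT.
Qed.

Hypothesis e2_conn : connected_graph e2.

Lemma full_fibre_step (D : {set T1 * T2}) g g' : cycle_convex P D ->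
  (forall h, (g, h) \in D) -> e1 g g' -> forall h0, (g', h0) \in D -> forall h, (g', h) \in D.
Proof.
move=> D_convex g_full gg' h0 g'h0 h; case/connectP: (e2_conn h0 h) => p + ->.
elim: p h0 g'h0 => //= h1 p IHp h0 g'h0 /andP[h0h1 h1_p].
exact: IHp (convex_square D_convex (g_full h0) (g_full h1) g'h0 gg' h0h1) h1_p.
Qed.

Lemma full_fibre_connect (D : {set T1 * T2}) h0 x g : cycle_convex P D ->
  (forall h, (x, h) \in D) -> connect (induced e1 (layer D h0)) x g -> forall h, (g, h) \in D.
Proof.
move=> D_convex x_full /connectP[p + ->].
elim: p x x_full => //= y p IHp x x_full /andP[/and3P[_ yD xy] y_p].
rewrite inE in yD; exact: IHp (full_fibre_step D_convex x_full xy yD) y_p.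
Qed.

Hypothesis e1_conn : connected_graph e1.

Lemma convex_full (D : {set T1 * T2}) h0 x : cycle_convex P D ->
  (forall g, (g, h0) \in D) -> (forall h, (x, h) \in D) -> forall u, u \in D.
Proof.
move=> D_convex layer_full x_full [g h]; apply: (@full_fibre_connect _ h0 x) => //.
apply: connect_sub (e1_conn x g) => u v uv; apply: connect1.
by rewrite /induced !inE !layer_full.
Qed.

Lemma hn_cc_prod_ltn_addn (g0 : T1) : 0 < hn_cc e2 -> hn_cc P < hn_cc e1 + hn_cc e2.
Proof.
move=> hn2_gt0; have [S /andP[/cc_hull_setP S_full /eqP <-]] := min_hull_set_exists e1.
have [R /andP[/cc_hull_setP R_full /eqP R_card]] := min_hull_set_exists e2.
have [h1 h1R] : exists h1, h1 \in R by apply/card_gt0P; rewrite R_card.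
pose U := [set (g, h1) | g in S] :|: [set (g0, h) | h in R :\ h1].
have U_hull : cc_hull_set P U.
  apply/cc_hull_setP => D /subsetP UD D_convex.
  have layer_full g : (g, h1) \in D.
    suff: g \in layer D h1 by rewrite inE.
    apply: S_full _ (layer_convex h1 D_convex) g.
    by apply/subsetP => s sS; rewrite inE UD // inE imset_f.
  have fibre_full h : (g0, h) \in D.
    suff: h \in fibre D g0 by rewrite inE.
    apply: R_full _ (fibre_convex g0 D_convex) h.
    apply/subsetP => r rR; rewrite inE; have [-> // | r_h1] := eqVneq r h1.
    by rewrite UD // !inE imset_f ?orbT // !inE r_h1.
  exact: convex_full D_convex layer_full fibre_full.
rewrite -R_card (cardsD1 h1 R) h1R add1n addnS ltnS.
apply: leq_trans (hn_cc_le_card U_hull) (leq_trans (leq_card_setU _ _).1 (leq_add _ _));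
  exact: leq_imset_card.
Qed.

Lemma hn_cc_prod_le_of_split (h1 h2 : T2) (S S1 S2 : {set T1}) :
  cc_hull_set e2 [set h1; h2] -> min_hull_set e1 S -> S1 :|: S2 = S -> S1 :&: S2 = set0 ->
  cc_hull e1 S1 :&: cc_hull e1 S2 != set0 -> hn_cc P <= hn_cc e1.
Proof.
move=> /cc_hull_setP R_full /andP[/cc_hull_setP S_full /eqP S_card] S12 S12_disj.
case/set0Pn=> x /setIP[xS1 xS2].
have [Q [QS2 xQ Q_conn]] := cc_hull_connected_subset e1_sym xS2.
pose f g := (g, if g \in Q then h2 else h1).
have f_inj : injective f by move=> u v [].
suff U_hull : cc_hull_set P (f @: S) by rewrite -S_card -(card_imset _ f_inj) hn_cc_le_card.
apply/cc_hull_setP => D /subsetP UD D_convex.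
have fD s : s \in S -> f s \in D by move=> sS; rewrite UD ?imset_f.
have S1_layer : S1 \subset layer D h1.
  apply/subsetP => s sS1; have sS : s \in S by rewrite -S12 inE sS1.
  have sQ : s \notin Q.
    by apply/negP => /(subsetP QS2) sS2; move/setP/(_ s): S12_disj; rewrite !inE sS1 sS2.
  by have := fD s sS; rewrite /f (negbTE sQ) inE.
have Q_layer : Q \subset layer D h2.
  apply/subsetP => q qQ; have qS : q \in S by rewrite -S12 inE (subsetP QS2) ?orbT.
  by have := fD q qS; rewrite /f qQ inE.
have x_fibre h : (x, h) \in D.
  suff: h \in fibre D x by rewrite inE.
  apply: R_full _ (fibre_convex x D_convex) h.
  apply/subsetP => k; rewrite !inE => /orP[] /eqP ->.
    by have := subsetP (cc_hull_min S1_layer (layer_convex h1 D_convex)) x xS1; rewrite inE.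
  by have := subsetP (cc_hull_min Q_layer (layer_convex h2 D_convex)) x xQ; rewrite inE.
have S_layer : S \subset layer D h1.
  apply/subsetP => s sS; rewrite inE; have [sQ | sQ] := boolP (s \in Q).
    apply: (full_fibre_connect (h0 := h2) D_convex x_fibre _ h1).
    exact: connect_inducedS (cc_hull_min Q_layer (layer_convex h2 D_convex)) (Q_conn s sQ).
  by have := fD s sS; rewrite /f (negbTE sQ).
have layer_full g : (g, h1) \in D.
  by have := S_full _ S_layer (layer_convex h1 D_convex) g; rewrite inE.
exact: convex_full D_convex layer_full x_fibre.
Qed.

End CartesianProduct.

Theorem mainTheorem8 (T1 T2 : finType) (e1 : rel T1) (e2 : rel T2) :
  simple_graph e1 -> simple_graph e2 ->
  1 < #|T1| -> 1 < #|T2| ->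
  connected_graph e1 -> connected_graph e2 ->
  hn_cc e2 = 2 ->
  [/\ hn_cc e1 <= hn_cc (cart_prod e1 e2),
      hn_cc (cart_prod e1 e2) <= (hn_cc e1).+1 &
      (hn_cc (cart_prod e1 e2) = hn_cc e1 <->
       exists S S1 S2 : {set T1},
         [/\ min_hull_set e1 S, S1 :|: S2 = S, S1 :&: S2 = set0 &
             cc_hull e1 S1 :&: cc_hull e1 S2 != set0])].
Proof.
move=> [e1_sym e1_irr] [e2_sym e2_irr] T1_gt1 T2_gt1 e1_conn e2_conn hn2.
have [g0 _] : exists g : T1, g \in T1 by apply/card_gt0P; exact: ltnW.
have /card_gt1P[hA [hB [_ _ hAB]]] := T2_gt1.
have [R /andP[R_hull]] := min_hull_set_exists e2.
rewrite hn2 => /cards2P[h1 [h2 [_ R_pair]]]; rewrite R_pair in R_hull.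
have hn_le := hn_cc_le_prod e1_sym e2_sym hA.
split=> //.
  have := hn_cc_prod_ltn_addn e1_sym e2_sym e1_irr e2_conn e1_conn g0.
  by rewrite hn2 addn2; apply.
split=> [/(split_of_hn_cc_prod e1_sym e2_sym e2_irr g0 hAB) // |].
case=> S [S1 [S2 [S_min S12 S12_disj S12_meet]]]; apply/eqP; rewrite eqn_leq hn_le andbT.
exact: (hn_cc_prod_le_of_split e1_sym e2_sym e1_irr e2_conn e1_conn
          R_hull S_min S12 S12_disj S12_meet).
Qed.
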